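(* Let $r\ge2$, $\ell\ge1$, and let $C=(w_1,\dots,w_{2\ell+1})$ be a semi-valid tuple in $\Omega_n$ with $|[w_i,w_{i-1}]|\ge r$ for all $i$ (indices mod $2\ell+1$). Then $H_n^{(r)}(C)$ is $M_1^{(r)}$-saturated.
   Context: $\Omega_n=\{v_0,\dots,v_{n-1}\}$ with cyclic order $v_0<\dots<v_{n-1}<v_0$. For distinct vertices $u,w$, $(u,w)$ is the set of vertices strictly between $u$ and $w$ moving clockwise from $u$ to $w$, and $[u,w]=(u,w)\cup\{u,w\}$. A tuple of distinct vertices $C=(w_1,\dots,w_{2\ell+1})$ is semi-valid if $w_1<w_3<\dots<w_{2\ell+1}<w_2<w_4<\dots<w_{2\ell}<w_1$ in clockwise cyclic order. $H_n^{(r)}(C)=\{e\in\binom{\Omega_n}{r}: e\cap[w_i,w_{i-1}]\neq\emptyset\ \forall i\}$. $M_1^{(r)}$ is the $r$-cgh consisting of two geometrically disjoint edges $\{v_0,\dots,v_{r-1}\},\{v_r,\dots,v_{2r-1}\}$; an $r$-cgh $H$ on $\Omega_n$ contains a copy of it iff there are edges $h_1,h_2\in H$ and vertices $u\neq u'$ with $h_1\subseteq[u,u']$, $h_2\cap[u,u']=\emptyset$. $H$ is $M_1^{(r)}$-saturated if it contains no copy, but $H\cup\{e\}$ contains one for every $e\in\binom{\Omega_n}{r}\setminus H$. *)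

From mathcomp Require Import all_boot.
Set Implicit Arguments. Unset Strict Implicit. Unset Printing Implicit Defensive.

(* Omega_n = 'I_n, vertex v_i = i, clockwise order = increasing index mod n. *)

(* closed clockwise interval [u,w] = {u, u+1, ..., w} (indices mod n) *)
Definition cinterval (n : nat) (u w : 'I_n) : {set 'I_n} :=
  [set x : 'I_n | (x + n - u) %% n <= (w + n - u) %% n].

(* a sequence of distinct vertices listed in clockwise cyclic order:
   some rotation of it is strictly increasing *)
Definition cyc_ordered (n : nat) (s : seq 'I_n) : Prop :=
  exists k, sorted ltn (map val (rot k s)).

(* C = (w_1,...,w_{2l+1}) is encoded 0-indexed as w : 'I_(2l+1) -> 'I_n,
   w_j (1-indexed) = w (j-1). *)
Definition semi_valid (n l : nat) (w : 'I_(l.*2.+1) -> 'I_n) : Prop :=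
  injective w /\
  cyc_ordered ([seq w (inord (i.*2)) | i <- iota 0 l.+1] ++
               [seq w (inord (i.*2.+1)) | i <- iota 0 l]).

Definition cprev (l : nat) (i : 'I_(l.*2.+1)) : 'I_(l.*2.+1) :=
  inord ((i + l.*2) %% l.*2.+1).

Definition HC (n r l : nat) (w : 'I_(l.*2.+1) -> 'I_n) : {set {set 'I_n}} :=
  [set e : {set 'I_n} | (#|e| == r) &&
     [forall i, e :&: cinterval (w i) (w (cprev i)) != set0]].

Definition contains_M1 (n : nat) (H : {set {set 'I_n}}) : Prop :=
  exists h1 h2 (u u' : 'I_n), [/\ h1 \in H, h2 \in H, u != u',
     h1 \subset cinterval u u' & h2 :&: cinterval u u' = set0].

Definition M1_saturated (n r : nat) (H : {set {set 'I_n}}) : Prop :=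
  ~ contains_M1 H /\
  forall e : {set 'I_n}, #|e| = r -> e \notin H -> contains_M1 (e |: H).

From mathcomp Require Import all_boot zify.
Set Implicit Arguments. Unset Strict Implicit. Unset Printing Implicit Defensive.

(* Read in clockwise order, a semi-valid tuple is the listing
   p_x = w_(2x mod N), x = 0..N-1 (N = 2l+1), and the interval [w_i, w_(i-1)]
   is the arc [p_x, p_(x+l)] spanning l+1 consecutive listed points.  After a
   rotation making the listing increasing, H_n^(r)(C) becomes the hypergraph
   of r-sets meeting all N such "spanning arcs" of an increasing sequence q.

   All geometry is done with the clockwise distance dst u x, under which
   cinterval a b = {x | dst a x <= dst a b}; the key fact is that changing the
   base point only shifts distances by a constant modulo n.
   - No copy of M_1: let q_j be the listed point first reached clockwise from
     u.  Either the arc starting at q_j lies in [u,u'] (so h2 misses it), or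
     the arc starting at q_(j+l) lies outside [u,u'] (so h1 misses it).
   - Saturation: an r-set e outside H misses some arc; fill that arc's two
     endpoints up to an r-set h inside it.  h is an edge, since every arc
     contains one of the two endpoints, and the clockwise hull [u,u'] of e
     is disjoint from the arc, hence from h. *)

Lemma modn_lt_twice (x N : nat) : x < N + N -> x %% N = if x < N then x else x - N.
Proof.
move=> hx; case: ifP => h; first by rewrite modn_small.
have -> : x = (x - N) + N by lia.
rewrite modnDr modn_small; lia.
Qed.

Lemma double_congr_mod d x y : x = y %[mod d] -> x.*2 = y.*2 %[mod d].
Proof. by move=> xy; rewrite -!muln2 -modnMml xy modnMml. Qed.

Definition dst n (u x : 'I_n) : nat := (x + n - u) %% n.

Lemma dstE n (u x : 'I_n) : dst u x = if u <= x then x - u else x + n - u.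
Proof.
have hx := ltn_ord x; have hu := ltn_ord u.
rewrite /dst modn_lt_twice; last by lia.
case: ifP; case: ifP; lia.
Qed.

Lemma dst_le n (u x : 'I_n) : u <= x -> dst u x = x - u.
Proof. by rewrite dstE => ->. Qed.

Lemma dst_gt n (u x : 'I_n) : x < u -> dst u x = x + n - u.
Proof. by move=> xu; rewrite dstE leqNgt xu. Qed.

Lemma dst_lt n (u x : 'I_n) : dst u x < n.
Proof. by rewrite ltn_pmod // (leq_ltn_trans _ (ltn_ord u)). Qed.

Lemma dst_inj n (u x y : 'I_n) : dst u x = dst u y -> x = y.
Proof.
rewrite !dstE => h; apply: val_inj => /=.
have hx := ltn_ord x; have hu := ltn_ord u; have hy := ltn_ord y.
move: h; case: (leqP u x); case: (leqP u y); lia.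
Qed.

Lemma dst_split n (u y x : 'I_n) :
  dst u y + dst y x = dst u x \/ dst u y + dst y x = dst u x + n.
Proof.
have hsum : (dst u y + dst y x) %% n = dst u x.
  have hu := ltn_ord u; have hy := ltn_ord y.
  rewrite /dst modnDm.
  have -> : y + n - u + (x + n - y) = x + n - u + n by lia.
  by rewrite modnDr.
have ltu := dst_lt u y; have lty := dst_lt y x.
rewrite -hsum modn_lt_twice; last by lia.
case: ifP => h; lia.
Qed.

Lemma mem_cinterval n (a b x : 'I_n) : (x \in cinterval a b) = (dst a x <= dst a b).
Proof. by rewrite inE. Qed.

Lemma dst_rebase n (u y x : 'I_n) : dst u y <= dst u x -> dst y x = dst u x - dst u y.
Proof. by have := dst_split u y x; have := dst_lt y x; lia. Qed.

Lemma dst_rebase_lt n (u y x : 'I_n) :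
  dst u x < dst u y -> dst y x = dst u x + n - dst u y.
Proof. by have := dst_split u y x; have := dst_lt y x; lia. Qed.

Lemma dst_between n (u y z x : 'I_n) :
  dst u y <= dst u z -> dst y x <= dst y z -> dst u y <= dst u x <= dst u z.
Proof.
move=> hyz hx; have eB := dst_rebase hyz; have hz := dst_lt u z.
case: (leqP (dst u y) (dst u x)) => hyx.
  by have := dst_rebase hyx; lia.
by have := dst_rebase_lt hyx; lia.
Qed.

Lemma subset_card_between (T : finType) (X Y : {set T}) k :
  X \subset Y -> #|X| <= k <= #|Y| ->
  exists Z : {set T}, [/\ X \subset Z, Z \subset Y & #|Z| = k].
Proof.
move=> hXY /andP[hXk]; have [m ->] : exists m, k = #|X| + m by exists (k - #|X|); lia.
elim: m X hXY {hXk} => [|m IH] X hXY hkY; first by exists X; rewrite addn0.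
have : 0 < #|Y :\: X| by rewrite cardsDS //; lia.
rewrite card_gt0 => /set0Pn [y]; rewrite inE => /andP [hyX hyY].
have cyX : #|y |: X| = #|X|.+1 by rewrite cardsU1 hyX.
have hyXY : y |: X \subset Y by rewrite subUset sub1set hyY.
have [|Z [hXZ hZY hZ]] := IH (y |: X) hyXY; first lia.
exists Z; split => //; last by rewrite hZ cyX addSnnS.
exact: subset_trans (subsetUr _ _) hXZ.
Qed.

(* Two edges e, h of H with |e| >= 2, h inside an interval [a,b] and e
   outside it form a copy of M_1: the clockwise hull [u,u'] of e, measured
   from a, contains e and avoids [a,b]. *)
Lemma M1_of_separated_edges n (H : {set {set 'I_n}}) (e h : {set 'I_n}) (a b : 'I_n) :
  e \in H -> h \in H -> 1 < #|e| ->
  h \subset cinterval a b -> e :&: cinterval a b = set0 -> contains_M1 H.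
Proof.
move=> eH hH /card_gt1P [x [y [ex ey xy]]] hsub edis.
have eout z : z \in e -> dst a b < dst a z.
  move=> ez; rewrite ltnNge -mem_cinterval; apply/negP => zab.
  have : z \in e :&: cinterval a b by rewrite inE ez.
  by rewrite edis inE.
have [u eu umin] := arg_minnP (fun z => dst a z) ex.
have [u' eu' umax] := arg_maxnP (fun z => dst a z) ex.
have uu' := dst_rebase (umin _ eu').
exists e, h, u, u'; split => //.
- apply/eqP => equ; move/eqP: xy; apply.
  have dst_e z : z \in e -> dst a z = dst a u.
    by move=> ez; have := umin _ ez; have := umax _ ez; rewrite -equ; lia.
  by apply: (dst_inj (u := a)); rewrite !dst_e.
- apply/subsetP => z ez; rewrite mem_cinterval (dst_rebase (umin _ ez)) uu'.
  by have := umax _ ez; lia.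
- apply/setP => z; rewrite inE in_set0 mem_cinterval; apply/negbTE.
  case: (boolP (z \in h)) => //= hz.
  have za : dst a z < dst a u.
    by have := eout _ eu; move: (subsetP hsub _ hz); rewrite mem_cinterval; lia.
  rewrite (dst_rebase_lt za) uu' -ltnNge.
  by have := dst_lt a u; have := dst_lt a u'; lia.
Qed.

Section ArcHypergraph.

Variables (n l : nat) (q : nat -> 'I_n).
Local Notation N := l.*2.+1.
Hypothesis q_incr : forall a b, a < b -> b < N -> q a < q b.

Definition span_arc (a : nat) : {set 'I_n} := cinterval (q a) (q ((a + l) %% N)).

Definition span_graph (r : nat) : {set {set 'I_n}} :=
  [set e : {set 'I_n} | (#|e| == r) && [forall a : 'I_N, e :&: span_arc a != set0]].

Lemma q_le a b : a <= b -> b < N -> q a <= q b.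
Proof.
by rewrite leq_eqVlt => /predU1P [-> //|ab bN]; apply/ltnW/q_incr.
Qed.

Lemma dst_q_mono j s s' : j < N -> s <= s' < N ->
  dst (q j) (q ((j + s) %% N)) <= dst (q j) (q ((j + s') %% N)).
Proof.
move=> jN /andP [ss' s'N].
rewrite !(@modn_lt_twice (j + _)); try lia.
case: (ltnP (j + s') N) => hs'; case: (ltnP (j + s) N) => hs; try lia.
- have le1 := q_le (leq_addr s j) hs.
  have le2 : q (j + s) <= q (j + s') by apply: q_le; lia.
  by rewrite !dst_le //; [lia | apply: leq_trans le2].
- have le1 := q_le (leq_addr s j) hs.
  have lt2 : q (j + s' - N) < q j by apply: q_incr; lia.
  by rewrite dst_le // dst_gt //; have := ltn_ord (q (j + s)); lia.
- have lt1 : q (j + s - N) < q j by apply: q_incr; lia.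
  have lt2 : q (j + s' - N) < q j by apply: q_incr; lia.
  have le3 : q (j + s - N) <= q (j + s' - N) by apply: q_le; lia.
  by rewrite !dst_gt //; lia.
Qed.

Lemma dst_q_mono_from u j s s' :
  (forall c, c < N -> dst u (q j) <= dst u (q c)) -> j < N -> s <= s' < N ->
  dst u (q ((j + s) %% N)) <= dst u (q ((j + s') %% N)).
Proof.
move=> jmin jN ss'.
have /andP [_ //] := dst_between (jmin _ (ltn_pmod _ (ltn0Sn _))) (dst_q_mono jN ss').
Qed.

Lemma span_arc_mem c s : c < N -> s <= l -> q ((c + s) %% N) \in span_arc c.
Proof. by move=> cN sl; rewrite mem_cinterval dst_q_mono // sl /=; lia. Qed.

(* Every spanning arc contains one of the two endpoints of any spanning
   arc, since the arcs cover l+1 of the 2l+1 cyclic positions. *)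
Lemma span_arc_meets c a : c < N -> a < N ->
  (q a \in span_arc c) || (q ((a + l) %% N) \in span_arc c).
Proof.
move=> cN aN; set d := (a + N - c) %% N.
have cdE : (c + d) %% N = a.
  by rewrite modnDmr (_ : c + (a + N - c) = a + N) ?modnDr ?modn_small //; lia.
have dN : d < N by rewrite ltn_pmod.
case: (leqP d l) => dl; first by rewrite -{1}cdE span_arc_mem.
have -> : (a + l) %% N = (c + (d - l.+1)) %% N.
  by rewrite -[RHS](modnDr _ N) -cdE modnDml; congr (_ %% N); lia.
by rewrite span_arc_mem ?orbT //; lia.
Qed.

Lemma span_graph_no_M1 r : ~ contains_M1 (span_graph r).
Proof.
move=> [h1 [h2 [u [u' [h1H h2H _ h1sub h2dis]]]]].
move: h1H h2H; rewrite !inE => /andP [_ /forallP h1arcs] /andP [_ /forallP h2arcs].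
have [j _ jmin'] := arg_minnP (fun c : 'I_N => dst u (q c)) (isT : xpredT ord0).
have jmin c : c < N -> dst u (q j) <= dst u (q c).
  by move=> cN; exact: (jmin' (Ordinal cN)).
pose jl : 'I_N := Ordinal (ltn_pmod (j + l) (ltn0Sn l.*2)).
case: (leqP (dst u (q jl)) (dst u u')) => jlu.
- have /set0Pn [x] := h2arcs j; rewrite !inE => /andP [xh2 xarc].
  have /andP [_ xjl] := dst_between (jmin _ (ltn_ord jl)) xarc.
  have : x \in h2 :&: cinterval u u' by rewrite inE xh2 mem_cinterval (leq_trans xjl).
  by rewrite h2dis inE.
- have /set0Pn [x] := h1arcs jl; rewrite !inE => /andP [xh1 xarc].
  have jll : dst u (q jl) <= dst u (q ((jl + l) %% N)).
    by rewrite /= modnDml -addnA addnn dst_q_mono_from //; lia.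
  have /andP [jlx _] := dst_between jll xarc.
  by move: (subsetP h1sub _ xh1); rewrite mem_cinterval leqNgt (leq_trans jlu).
Qed.

Lemma span_graph_filler r a : a < N -> 2 <= r <= #|span_arc a| ->
  exists2 h, h \in span_graph r & h \subset span_arc a.
Proof.
move=> aN /andP [r2 rarc]; set b := (a + l) %% N.
have qa : q a \in span_arc a.
  by have := span_arc_mem aN (leq0n l); rewrite addn0 modn_small.
have qb : q b \in span_arc a by exact: span_arc_mem.
have ab_arc : [set q a; q b] \subset span_arc a by rewrite subUset !sub1set qa qb.
have [|h [abh harc hr]] := subset_card_between (k := r) ab_arc.
  by rewrite cards2 rarc andbT; case: (_ != _); lia.
exists h => //; rewrite inE hr eqxx /=; apply/forallP => c; apply/set0Pn.
have [qac|qbc] := orP (span_arc_meets (ltn_ord c) aN).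
- by exists (q a); rewrite inE qac (subsetP abh) // !inE eqxx.
- by exists (q b); rewrite inE qbc (subsetP abh) // !inE eqxx orbT.
Qed.

Lemma span_graph_saturated r : 2 <= r -> (forall a : 'I_N, r <= #|span_arc a|) ->
  M1_saturated r (span_graph r).
Proof.
move=> r2 arcr; split; first exact: span_graph_no_M1.
move=> e er; rewrite inE er eqxx negb_forall => /existsP [a]; rewrite negbK => /eqP ea.
have [h hH harc] := span_graph_filler (ltn_ord a) (introT andP (conj r2 (arcr a))).
apply: (M1_of_separated_edges (setU11 _ _) (setU1r _ hH) _ harc ea).
by rewrite er.
Qed.
End ArcHypergraph.

Lemma nth_rot T (x0 : T) (s : seq T) k i : k <= size s -> i < size s ->
  nth x0 (rot k s) i = nth x0 s ((i + k) %% size s).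
Proof.
move=> hk hi; rewrite /rot nth_cat size_drop modn_lt_twice; last by lia.
case: ifP => h1.
  by rewrite nth_drop ifT; [congr nth; lia | lia].
by rewrite nth_take ?ifF; [congr nth; lia | lia | lia].
Qed.

Section Reindexing.

Variables (n l : nat) (w : 'I_(l.*2.+1) -> 'I_n).
Local Notation N := l.*2.+1.

(* The x-th vertex of the tuple in clockwise order: w_(2x mod N). *)
Definition listing (x : nat) : 'I_n := w (inord ((x.*2) %% N)).

Lemma semi_valid_listingE :
  [seq w (inord (i.*2)) | i <- iota 0 l.+1] ++ [seq w (inord (i.*2.+1)) | i <- iota 0 l]
  = map listing (iota 0 N).
Proof.
rewrite (_ : N = l.+1 + l) ?iotaD ?map_cat; last by lia.
congr (_ ++ _).
  apply/eq_in_map => x; rewrite mem_iota /listing => /andP [_ xl].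
  by rewrite modn_small //; lia.
have -> : iota (0 + l.+1) l = map (addn l.+1) (iota 0 l) by rewrite -iotaDl addn0.
rewrite -map_comp; apply/eq_in_map => x; rewrite mem_iota /listing /= => xl.
by rewrite (_ : (l.+1 + x).*2 = x.*2.+1 + N) ?modnDr ?modn_small //; lia.
Qed.

Lemma semi_valid_rotation : semi_valid w ->
  exists2 k, k < N & forall a b, a < b -> b < N ->
    listing ((a + k) %% N) < listing ((b + k) %% N).
Proof.
case=> _ [k]; rewrite semi_valid_listingE; set s := map listing _ => sorted_k.
have sN : size s = N by rewrite size_map size_iota.
have [k0 k0N sorted0] : exists2 k0, k0 < N & sorted ltn (map val (rot k0 s)).
  case: (ltnP k N) => kN; first by exists k.
  by move: sorted_k; rewrite rot_oversize ?sN //; exists 0; rewrite ?rot0.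
have nthE j : j < N -> nth 0 (map val (rot k0 s)) j = listing ((j + k0) %% N).
  move=> jN; rewrite (nth_map (listing 0)) ?size_rot ?sN // nth_rot ?sN ?(ltnW k0N) //.
  by rewrite (nth_map 0) ?size_iota ?nth_iota ?ltn_pmod.
exists k0 => // a b ab bN; have aN := ltn_trans ab bN.
rewrite -!nthE //; apply: (sorted_ltn_nth ltn_trans) => //;
  by rewrite inE size_map size_rot sN.
Qed.

Lemma listing_congr x y : x = y %[mod N] -> listing x = listing y.
Proof. by move=> xy; rewrite /listing (double_congr_mod xy). Qed.

(* The interval [w_i, w_(i-1)] is the spanning arc of the rotated listing
   starting at the position of w_i: indeed i - 1 = 2(x+l) mod N if i = 2x. *)
Lemma span_arc_listing k a :
  let i := inord (((a + k).*2) %% N) in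
  span_arc l (fun j => listing ((j + k) %% N)) a = cinterval (w i) (w (cprev i)).
Proof.
rewrite /span_arc /cprev inordK ?ltn_pmod // !modnDml -doubleD.
by congr (cinterval _ _); apply: listing_congr; rewrite modn_mod // addnAC.
Qed.

(* Every index i is of that form, as 2(l+1) = 1 mod N. *)
Lemma listing_index_onto k (i : 'I_N) : k < N ->
  exists a : 'I_N, i = inord (((a + k).*2) %% N).
Proof.
move=> kN; have aN : (i * l.+1 + (N - k)) %% N < N by rewrite ltn_pmod.
exists (Ordinal aN); apply/val_inj; rewrite /= inordK ?ltn_pmod //.
rewrite (double_congr_mod (modnDml _ k N)).
have -> : (i * l.+1 + (N - k) + k).*2 = (i + 2) * N + i by nia.
by rewrite modnMDl modn_small.
Qed.

Lemma HC_span_graph k r : k < N ->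
  HC r w = span_graph l (fun j => listing ((j + k) %% N)) r.
Proof.
move=> kN; apply/setP => e; rewrite !inE; congr (_ && _).
apply/forallP/forallP => he i; first by rewrite span_arc_listing.
by have [a ->] := listing_index_onto i kN; rewrite -span_arc_listing.
Qed.
End Reindexing.

Theorem lemma3p3 (n r l : nat) (w : 'I_(l.*2.+1) -> 'I_n) :
  2 <= r -> 1 <= l -> semi_valid w ->
  (forall i : 'I_(l.*2.+1), r <= #|cinterval (w i) (w (cprev i))|) ->
  M1_saturated r (HC r w).
Proof.
move=> r2 _ sv arc_sizes.
have [k kN incr] := semi_valid_rotation sv.
rewrite (HC_span_graph w r kN).
apply: (span_graph_saturated incr r2) => a.
by rewrite span_arc_listing.
Qed.
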